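(* Let $\mathbf{k}=\mathbb{R}$ or $\mathbb{C}$, let $(C^\bullet,\partial)$ be a complex of finite-dimensional $\mathbf{k}$-vector spaces of odd length $d=2r-1$ with a chirality operator $\Gamma$, and let $\langle\cdot,\cdot\rangle_j$ be Euclidean (if $\mathbf{k}=\mathbb{R}$) or Hermitian (if $\mathbf{k}=\mathbb{C}$) scalar products on $C^j$, $j=0,\dots,d$, such that $\Gamma$ is self-adjoint. Let $\|\cdot\|_{\operatorname{Det}(H^\bullet(\partial))}$ be the metric on $\operatorname{Det}(H^\bullet(\partial))$ for which $\phi_{C^\bullet}$ is an isometry, where $\operatorname{Det}(C^\bullet)$ carries the metric induced by the scalar products. Then $\|\rho_\Gamma\|_{\operatorname{Det}(H^\bullet(\partial))}=1$.
   Context: Determinant lines: $\operatorname{Det}(V)=\Lambda^{\dim V}V$, $\operatorname{Det}(0)=\mathbf{k}$, $L^{-1}=\operatorname{Hom}(L,\mathbf{k})$, $l^{-1}(l)=1$, $\operatorname{Det}(V^\bullet)=\bigotimes_j\operatorname{Det}(V^j)^{(-1)^j}$; $\mu_{V_1,\dots,V_r}$ is the fusion isomorphism given by concatenating wedges. The isomorphism $\phi_{C^\bullet}:\operatorname{Det}(C^\bullet)\to\operatorname{Det}(H^\bullet(\partial))$: choose $C^j=B^j\oplus H^j\oplus A^j$ with $B^j\oplus H^j=\operatorname{Ker}\partial\cap C^j$, $B^j=\partial(A^{j-1})=\partial(C^{j-1})$, $A^{-1}=A^d=0$; for nonzero $c_j\in\operatorname{Det}(C^j)$, $a_j\in\operatorname{Det}(A^j)$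 ($a_{-1}=1$), $h_j\in\operatorname{Det}(H^j)\cong\operatorname{Det}(H^j(\partial))$ is unique with $c_j=\mu_{B^j,H^j,A^j}(\partial(a_{j-1})\otimes h_j\otimes a_j)$; $\phi_{C^\bullet}(c_0\otimes c_1^{-1}\otimes\cdots\otimes c_d^{(-1)^d})=(-1)^{\mathcal N}h_0\otimes h_1^{-1}\otimes\cdots\otimes h_d^{(-1)^d}$, $\mathcal N=\frac12\sum_j\dim A^j(\dim A^j+(-1)^{j+1})$; independent of choices. A chirality operator is an involution $\Gamma:C^\bullet\to C^\bullet$ with $\Gamma(C^j)=C^{d-j}$; $\Gamma c_j\in\operatorname{Det}(C^{d-j})$ denotes the image of $c_j\in\operatorname{Det}(C^j)$. For nonzero $c_j\in\operatorname{Det}(C^j)$, $j=0,\dots,r-1$, put $c_\Gamma=(-1)^{\mathcal R(C^\bullet)}c_0\otimes c_1^{-1}\otimes\cdots\otimes c_{r-1}^{(-1)^{r-1}}\otimes(\Gamma c_{r-1})^{(-1)^r}\otimes(\Gamma c_{r-2})^{(-1)^{r-1}}\otimes\cdots\otimes(\Gamma c_0)^{-1}\in\operatorname{Det}(C^\bullet)$, where $\mathcal R(C^\bullet)=\frac12\sum_{j=0}^{r-1}\dim C^j(\dim C^j+(-1)^{r+j})$; $c_\Gamma$ is independent of the $c_j$. The refined torsion is $\rho_\Gamma:=\phi_{C^\bullet}(c_\Gamma)\in\operatorname{Det}(H^\bullet(\partial))$. *)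

From mathcomp Require Import all_boot all_order all_algebra.
From mathcomp Require Import reals complex.
Set Implicit Arguments. Unset Strict Implicit. Unset Printing Implicit Defensive.
Import GRing.Theory Num.Theory.
Local Open Scope ring_scope.

(* kfield R false = R (Euclidean case), kfield R true = R[i] (Hermitian case) *)
Definition kfield (R : realType) (iscomplex : bool) : numFieldType :=
  if iscomplex then (R[i] : numFieldType) else (R : numFieldType).

Definition kconj (R : realType) (iscomplex : bool) :
    kfield R iscomplex -> kfield R iscomplex :=
  match iscomplex with
  | true => fun x : R[i] => Num.conj x
  | false => id
  end.

(** * Finite-dimensional spaces are k^m, vectors are row vectors 'rV_m. *)

Definition rows (K : Type) (p m : nat) (A : 'M[K]_(p, m)) : seq 'rV[K]_m :=
  [seq row i A | i <- enum 'I_p].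

Definition mx_of_rows (K : nmodType) (m : nat) (s : seq 'rV[K]_m) :
    'M[K]_(size s, m) := \matrix_(i < size s) nth 0 s i.

(* Det(k^m) = Lambda^m k^m is identified with k through its canonical
   generator e_1 /\ ... /\ e_m.  For vectors v_1,...,v_m of k^m,
   v_1 /\ ... /\ v_m = (wedge_coef [:: v_1; ...; v_m]) * (e_1 /\ ... /\ e_m). *)
Definition wedge_coef (K : comNzRingType) (m : nat) (s : seq 'rV[K]_m) : K :=
  if size s == m then \det (\matrix_(i < m, j < m) (nth 0 s i) 0 j) else 0.

(** * Scalar products.  A sesquilinear form on k^m is given by its Gram
    matrix G: <u, v> = u G v^*T (linear in u, conjugate-linear in v). *)
Definition sprod (R : realType) (b : bool) (m : nat)
    (G : 'M[kfield R b]_m) (u v : 'rV[kfield R b]_m) : kfield R b :=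
  (u *m G *m (map_mx (@kconj R b) v)^T) 0 0.

Definition is_scalar_product (R : realType) (b : bool) (m : nat)
    (G : 'M[kfield R b]_m) : Prop :=
  (forall u v, sprod G v u = kconj (sprod G u v)) /\
  (forall u, u != 0 -> 0 < sprod G u u).

Definition pw (K : fieldType) (j : nat) (x : K) : K :=
  if odd j then x^-1 else x.

(** * The complex (C^j, d_j), j = 0..d, with C^j = k^(n j);
    the differential d_j : C^j -> C^(j+1) acts on row vectors by v |-> v *m D j. *)

Definition imD (K : fieldType) (n : nat -> nat)
    (D : forall j, 'M[K]_(n j, n j.+1)) (j : nat) : 'M[K]_(n j.-1, n j) :=
  match j as j' return 'M[K]_(n j'.-1, n j') with
  | 0 => 0
  | i.+1 => D i
  end.

(* b is a family of vectors of Ker d_j whose classes form a basis of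
   H^j(d) = Ker d_j / Im d_{j-1} *)
Definition is_cohom_basis (K : fieldType) (n : nat -> nat)
    (D : forall j, 'M[K]_(n j, n j.+1)) (j : nat) (b : seq 'rV[K]_(n j)) : bool :=
  [&& (mx_of_rows b <= kermx (D j))%MS,
      (kermx (D j) <= mx_of_rows b + imD D j)%MS &
      (size b + \rank (imD D j) == \rank (kermx (D j)))%N].

Arguments is_cohom_basis {K n} D j b.
Arguments imD {K n} D j.

(* chosen complement A^j of Ker d_j in C^j, given by a basis *)
Definition Abasis (K : fieldType) (n : nat -> nat)
    (D : forall j, 'M[K]_(n j, n j.+1)) (j : nat) : seq 'rV[K]_(n j) :=
  rows (row_base ((kermx (D j))^C)%MS).

Arguments Abasis {K n} D j.

(* basis of B^j = d(A^{j-1}) (empty for j = 0, since A^{-1} = 0) *)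
Definition Bbasis (K : fieldType) (n : nat -> nat)
    (D : forall j, 'M[K]_(n j, n j.+1)) (j : nat) : seq 'rV[K]_(n j) :=
  match j as j' return seq 'rV[K]_(n j') with
  | 0 => [::]
  | i.+1 => [seq v *m D i | v <- Abasis D i]
  end.

Arguments Bbasis {K n} D j.

(* Det(C^.) = (x) Det(C^j)^((-1)^j) is identified with k via the generator
   e^0 (x) (e^1)^-1 (x) e^2 (x) ... , e^j = canonical generator of Det(C^j). *)
Definition DetC (K : numFieldType) := K.

(* tensor product c_0 (x) c_1^-1 (x) ... (x) c_d^((-1)^d) of c_j = x_j e^j *)
Definition det_tensor (K : numFieldType) (d : nat) (x : nat -> K) : DetC K :=
  \prod_(j < d.+1) pw j (x j).

(* metric on Det(C^.) induced by the scalar products (given by Gram matrices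
   G j); we use squared norms: ||v_1/\.../\v_m||^2 = det(<v_a,v_b>), the norm
   on an inverse line is the dual norm and norms multiply on tensor products. *)
Definition DetC_normsq (R : realType) (b : bool) (n : nat -> nat) (d : nat)
    (G : forall j, 'M[kfield R b]_(n j)) (x : DetC (kfield R b)) : kfield R b :=
  `|x| ^+ 2 * \prod_(j < d.+1) pw j (\det (G j)).

(* Det(H^.(d)) = (x) Det(H^j(d))^((-1)^j).  A vector of this line is
   represented by its coordinate function: to each family (b_j)_j where b_j
   represents a basis of H^j(d) it associates the scalar f(b) such that the
   vector equals f(b) . h_0 (x) h_1^-1 (x) ... with h_j = wedge of the classes
   of b_j.  (Values on non-bases are irrelevant.) *)
Definition DetH (K : numFieldType) (n : nat -> nat) :=
  (forall j, seq 'rV[K]_(n j)) -> K.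

(* For a family of bases b_j of H^j(d) we take H^j := span b_j,
   A^j := Abasis, B^j = d(A^{j-1}) (basis Bbasis), c_j := e^j, a_j := wedge of
   Abasis j.  Then e^j = mu(d(a_{j-1}) (x) h_j (x) a_j) with
   h_j = (wedge_coef (Bbasis ++ b_j ++ Abasis))^-1 . (wedge of b_j). *)
Definition N_exp (K : fieldType) (n : nat -> nat)
    (D : forall j, 'M[K]_(n j, n j.+1)) (d : nat) : nat :=
  \sum_(j < d.+1)
     let a := size (Abasis D j) in if odd j then 'C(a.+1, 2) else 'C(a, 2).

Definition phiC (K : numFieldType) (n : nat -> nat) (d : nat)
    (D : forall j, 'M[K]_(n j, n j.+1)) (x : DetC K) : DetH K n :=
  fun b =>
    if [forall j : 'I_d.+1, is_cohom_basis D j (b j)] then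
      (-1) ^+ N_exp D d * x *
      \prod_(j < d.+1) pw j (wedge_coef (Bbasis D j ++ b j ++ Abasis D j))^-1
    else 0.

(** * Chirality operator: Gam i j : C^i -> C^j is the (i,j) block of the
    operator Gamma on C^. = (+)_j C^j (acting on row vectors). *)
Definition is_chirality (K : numFieldType) (n : nat -> nat) (d : nat)
    (Gam : forall i j, 'M[K]_(n i, n j)) : Prop :=
  (forall i j, (i + j != d)%N -> Gam i j = 0) /\
  (forall i j, (i + j = d)%N -> Gam i j *m Gam j i = 1%:M).

(* exponent R(C^.) = 1/2 sum_{j<r} dim C^j (dim C^j + (-1)^(r+j)) *)
Definition R_exp (n : nat -> nat) (r : nat) : nat :=
  \sum_(j < r) (if odd (r + j) then 'C(n j, 2) else 'C((n j).+1, 2)).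

(* c_Gamma = (-1)^R c_0 (x) c_1^-1 (x) ... (x) c_{r-1}^((-1)^(r-1))
     (x) (Gam c_{r-1})^((-1)^r) (x) ... (x) (Gam c_0)^-1,
   for c_j = x_j e^j (j < r); Gam c_j = x_j (Gam e_1 /\ ... /\ Gam e_m)
   lies in Det(C^(d-j)), d = 2r-1. *)
Definition cGamma (K : numFieldType) (n : nat -> nat) (r : nat)
    (Gam : forall i j, 'M[K]_(n i, n j)) (c : nat -> K) : DetC K :=
  let d := (2 * r)%N.-1 in
  (-1) ^+ R_exp n r *
  det_tensor d (fun j => if (j < r)%N then c j
                         else c (d - j)%N * wedge_coef (rows (Gam (d - j)%N j))).

Definition refined_torsion (K : numFieldType) (n : nat -> nat) (r : nat)
    (D : forall j, 'M[K]_(n j, n j.+1)) (Gam : forall i j, 'M[K]_(n i, n j))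
    (c : nat -> K) : DetH K n :=
  phiC (2 * r)%N.-1 D (cGamma r Gam c).

From mathcomp Require Import all_boot all_order all_algebra.
From mathcomp Require Import reals complex.
From mathcomp Require Import ring zify.
Set Implicit Arguments. Unset Strict Implicit. Unset Printing Implicit Defensive.
Import Order.TTheory GRing.Theory Num.Theory.
Local Open Scope ring_scope.

(* Since phi is an isometry, only the norm of c_Gamma in Det(C^.) matters.
   There the factor c_j of Det(C^j) is paired with Gamma c_j in Det(C^(d-j)),
   and as d is odd the two carry opposite exponents.  A self-adjoint involution
   is unitary: Gamma G_(d-j) = G_j Gamma^*, hence
   det G_j = |det Gamma|^2 det G_(d-j), i.e. ||Gamma c_j|| = ||c_j||, and every
   pair contributes ||c_j||^2 ||Gamma c_j||^-2 = 1 (or its inverse). *)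

Section Conjugation.
Variables (R : realType) (b : bool).
Local Notation K := (kfield R b).
Local Notation kconj := (@kconj R b).

Lemma kconj0 : kconj 0 = 0.
Proof. by case: b => /=; rewrite ?conjC0. Qed.

Lemma kconj1 : kconj 1 = 1.
Proof. by case: b => /=; rewrite ?conjC1. Qed.

Lemma kconjM (x y : K) : kconj (x * y) = kconj x * kconj y.
Proof. by case: b x y => x y /=; rewrite ?rmorphM. Qed.

Lemma normK_kconj (x : K) : `|x| ^+ 2 = x * kconj x.
Proof. by case: b x => x /=; [exact: normCK | rewrite -expr2 real_normK ?num_real]. Qed.

Lemma det_map_kconj m (A : 'M[K]_m) : \det (map_mx kconj A) = kconj (\det A).
Proof. by case: b A => A /=; [exact: det_map_mx | rewrite map_mx_id]. Qed.

Lemma map_kconj_mulmx m p q (A : 'M[K]_(m, p)) (B : 'M_(p, q)) :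
  map_mx kconj (A *m B) = map_mx kconj A *m map_mx kconj B.
Proof. by case: b A B => A B /=; [exact: map_mxM | rewrite !map_mx_id]. Qed.

Lemma map_kconj_delta m p (i : 'I_m) (j : 'I_p) :
  map_mx kconj (delta_mx i j) = delta_mx i j.
Proof. by apply/matrixP => a c; rewrite !mxE; case: (_ && _); rewrite ?kconj0 ?kconj1. Qed.

Definition sform m p (X : 'M[K]_(m, p)) (u : 'rV_m) (v : 'rV_p) : K :=
  (u *m X *m (map_mx kconj v)^T) 0 0.

Lemma sform_delta m p (X : 'M[K]_(m, p)) (i : 'I_m) (j : 'I_p) :
  sform X (delta_mx 0 i) (delta_mx 0 j) = X i j.
Proof. by rewrite /sform map_kconj_delta trmx_delta -rowE -colE !mxE. Qed.

Lemma sform_inj m p (X Y : 'M[K]_(m, p)) :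
  (forall u v, sform X u v = sform Y u v) -> X = Y.
Proof. by move=> eqXY; apply/matrixP => i j; rewrite -!sform_delta. Qed.

Lemma sprod_mulmxl m p (G : 'M[K]_p) (A : 'M_(m, p)) u v :
  sprod G (u *m A) v = sform (A *m G) u v.
Proof. by rewrite /sprod /sform !mulmxA. Qed.

Lemma sprod_mulmxr m p (G : 'M[K]_m) (B : 'M_(p, m)) u v :
  sprod G u (v *m B) = sform (G *m (map_mx kconj B)^T) u v.
Proof. by rewrite /sprod /sform map_kconj_mulmx trmx_mul !mulmxA. Qed.

Lemma gram_adjoint m p (A : 'M[K]_(m, p)) (B : 'M_(p, m)) Gi Gj :
  (forall u v, sprod Gj (u *m A) v = sprod Gi u (v *m B)) ->
  A *m Gj = Gi *m (map_mx kconj B)^T.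
Proof. by move=> adjAB; apply: sform_inj => u v; rewrite -sprod_mulmxl -sprod_mulmxr. Qed.

Lemma det_gram_adjoint m (A B : 'M[K]_m) Gi Gj :
  A *m B = 1%:M -> A *m Gj = Gi *m (map_mx kconj B)^T ->
  \det Gi = `|\det A| ^+ 2 * \det Gj.
Proof.
move=> AB1 /(congr1 determinant); rewrite !det_mulmx det_tr det_map_kconj => detAG.
have detAB : \det A * \det B = 1 by rewrite -det_mulmx AB1 det1.
by rewrite normK_kconj -mulrA mulrCA detAG mulrCA -kconjM detAB kconj1 mulr1.
Qed.

Lemma scalar_product_det_neq0 m (G : 'M[K]_m) : is_scalar_product G -> \det G != 0.
Proof.
case=> _ sprod_gt0; apply/negP => /det0P [v v_neq0 vG0].
by have := sprod_gt0 v v_neq0; rewrite /sprod vG0 mul0mx mxE ltxx.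
Qed.

End Conjugation.

Lemma mulmx1_dim (F : fieldType) m p (A : 'M[F]_(m, p)) B :
  A *m B = 1%:M -> B *m A = 1%:M -> m = p.
Proof.
have rank_le (m1 p1 : nat) (X : 'M[F]_(m1, p1)) Y : X *m Y = 1%:M -> (m1 <= p1)%N.
  by move=> XY1; rewrite -[m1](mxrank1 F) -XY1 (leq_trans (mxrankM_maxl _ _)) ?rank_leq_col.
by move=> /rank_le AB /rank_le BA; apply/eqP; rewrite eqn_leq AB BA.
Qed.

Lemma wedge_coef_rows (F : comNzRingType) m (A : 'M[F]_m) : wedge_coef (rows A) = \det A.
Proof.
rewrite /wedge_coef /rows size_map size_enum_ord eqxx; congr (\det _).
by apply/matrixP => i j; rewrite !mxE (nth_map i) ?size_enum_ord // nth_ord_enum mxE.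
Qed.

Lemma wedge_coef_rows_neq0 (F : fieldType) m p (A : 'M[F]_(m, p)) B :
  A *m B = 1%:M -> B *m A = 1%:M -> wedge_coef (rows A) != 0.
Proof.
move=> AB1 BA1; have mp := mulmx1_dim AB1 BA1; subst p.
apply/eqP => detA0; move/(congr1 determinant): AB1.
by rewrite det_mulmx -wedge_coef_rows detA0 mul0r det1 => /esym/eqP; rewrite oner_eq0.
Qed.

Lemma det_gram_involution (R : realType) b m p (A : 'M[kfield R b]_(m, p)) B Gi Gj :
  A *m B = 1%:M -> B *m A = 1%:M ->
  (forall u v, sprod Gj (u *m A) v = sprod Gi u (v *m B)) ->
  \det Gi = `|wedge_coef (rows A)| ^+ 2 * \det Gj.
Proof.
move=> AB1 BA1 adjAB; have mp := mulmx1_dim AB1 BA1; subst p.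
by rewrite wedge_coef_rows; apply: det_gram_adjoint AB1 (gram_adjoint adjAB).
Qed.

Lemma normsq_pw_pair (K : numFieldType) (i j : nat) (x w g : K) :
  odd j = ~~ odd i -> x != 0 -> w != 0 -> g != 0 ->
  (`|pw i x| ^+ 2 * pw i (`|w| ^+ 2 * g)) * (`|pw j (x * w)| ^+ 2 * pw j g) = 1.
Proof.
move=> oddj x_neq0 w_neq0 g_neq0; rewrite /pw oddj.
have nx : `|x| != 0 by rewrite normr_eq0.
have nw : `|w| != 0 by rewrite normr_eq0.
by case: (odd i); rewrite /= ?normrV ?unitfE ?mulf_neq0 // normrM; field; rewrite nx nw g_neq0.
Qed.

Lemma big_ord_pairs (T : Type) (idx : T) (op : Monoid.com_law idx) r
    (F : 'I_(r + r) -> T) :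
  \big[op/idx]_(j < r + r) F j
  = \big[op/idx]_(j < r) op (F (lshift r j)) (F (rshift r (rev_ord j))).
Proof.
rewrite big_split_ord [\big[op/idx]_(j < r) F (rshift r j)](reindex_inj rev_ord_inj).
by rewrite /= -big_split.
Qed.

Lemma DetC_normsq_tensor (R : realType) b (n : nat -> nat) d
    (G : forall j, 'M[kfield R b]_(n j)) s (x : nat -> kfield R b) :
  DetC_normsq d G (s * det_tensor d x)
  = `|s| ^+ 2 * \prod_(j < d.+1) (`|pw j (x j)| ^+ 2 * pw j (\det (G j))).
Proof.
by rewrite /DetC_normsq /det_tensor normrM exprMn normr_prod -prodrXl -mulrA -big_split.
Qed.

Theorem lemma4p3 (R : realType) (iscomplex : bool) (r : nat) (n : nat -> nat)
    (D : forall j, 'M[kfield R iscomplex]_(n j, n j.+1))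
    (Gam : forall i j, 'M[kfield R iscomplex]_(n i, n j))
    (G : forall j, 'M[kfield R iscomplex]_(n j))
    (c : nat -> kfield R iscomplex)
    (normsqH : DetH (kfield R iscomplex) n -> kfield R iscomplex) :
  (* odd length d = 2r - 1 *)
  (0 < r)%N ->
  (* C^j = 0 for j > d *)
  (forall j, ((2 * r)%N.-1 < j)%N -> n j = 0%N) ->
  (* (C^., D) is a complex *)
  (forall j, D j *m D j.+1 = 0) ->
  (* Gam is a chirality operator *)
  is_chirality (2 * r)%N.-1 Gam ->
  (* Euclidean / Hermitian scalar products on each C^j *)
  (forall j, is_scalar_product (G j)) ->
  (* Gam is self-adjoint for the (orthogonal sum of the) scalar products *)
  (forall i j (u : 'rV_(n i)) (v : 'rV_(n j)),
      sprod (G j) (u *m Gam i j) v = sprod (G i) u (v *m Gam j i)) ->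
  (* nonzero c_j in Det(C^j), j = 0..r-1 *)
  (forall j, (j < r)%N -> c j != 0) ->
  (* the metric on Det(H^.(D)) makes phi_{C^.} an isometry *)
  (forall x, normsqH (phiC (2 * r)%N.-1 D x)
             = DetC_normsq (2 * r)%N.-1 G x) ->
  normsqH (refined_torsion r D Gam c) = 1.
Proof.
move=> r_gt0 _ _ [_ Gam_inv] G_sp Gam_adj c_neq0 phi_isometry.
rewrite /refined_torsion phi_isometry /cGamma DetC_normsq_tensor normrX normrN1 !expr1n mul1r.
set d := (2 * r).-1.
have -> : d.+1 = (r + r)%N by rewrite /d; lia.
rewrite big_ord_pairs big1 // => j _ /=.
have j_lt_r := ltn_ord j.
have -> : (r + (r - j.+1) = d - j)%N by rewrite /d; lia.
have [jd dj] : (j + (d - j) = d)%N /\ (d - j + j = d)%N by rewrite /d; split; lia.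
have [-> ->] : (d - (d - j) = j)%N /\ (d - j < r)%N = false.
  by rewrite /d; split; [lia | apply/negbTE; rewrite -leqNgt; lia].
rewrite j_lt_r (det_gram_involution (Gam_inv _ _ jd) (Gam_inv _ _ dj) (Gam_adj _ _)).
apply: normsq_pw_pair; rewrite ?c_neq0 ?scalar_product_det_neq0 //.
- by rewrite oddB ?odd_pred ?oddM ?andbF /d; lia.
- exact: wedge_coef_rows_neq0 (Gam_inv _ _ jd) (Gam_inv _ _ dj).
Qed.
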